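(* (i) Let $(T,R)$ be a time frame. Then $([0,1]^T;f_R,f_{R^{-1}})$, where $[0,1]^T$ is the power of the standard Pavelka algebra, is a tense Pavelka algebra. (ii) Let $(\mathbf A,G,H)$ be a tense Pavelka algebra whose underlying Pavelka algebra $\mathbf A$ is semisimple. Then, with $T=\mathrm{Spec_M}\mathbf A$ and $R(F,F')=\bigwedge_{a\in A}(G(a)/F'\rightarrow a/F)$ for $F,F'\in T$, the natural embedding $n_{\mathbf A}\colon A\to[0,1]^T$ is an injective homomorphism of Pavelka algebras satisfying $n_{\mathbf A}(G(x))=f_R(n_{\mathbf A}(x))$ and $n_{\mathbf A}(H(x))=f_{R^{-1}}(n_{\mathbf A}(x))$ for all $x\in A$; i.e. $(\mathbf A,G,H)$ embeds into the tense Pavelka algebra induced by the time frame $(T,R)$.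
   Context: An MV-algebra $(A;\oplus,\neg,0)$ carries derived operations $1=\neg0$, $x\cdot y=\neg(\neg x\oplus\neg y)$, $x\rightarrow y=\neg x\oplus y$, $x\vee y=\neg(\neg x\oplus y)\oplus y$, $x\wedge y=\neg(\neg x\vee\neg y)$, order $x\le y$ iff $\neg x\oplus y=1$. The standard MV-algebra is $[0,1]$ with $x\oplus y=\min\{x+y,1\}$, $\neg x=1-x$. A Pavelka algebra is $\mathbf A=(A;\oplus,\neg,\{\mathbf r\mid r\in[0,1]\cap\mathbb Q\})$ with $(A;\oplus,\neg,\mathbf 0)$ an MV-algebra, $\mathbf r\oplus\mathbf s=\mathbf t$ whenever $\min\{r+s,1\}=t$, $\neg\mathbf r=\mathbf s$ whenever $1-r=s$. The standard Pavelka algebra is $[0,1]$ with $\mathbf r$ interpreted as $r$; $[0,1]^T$ is its power. Filters are filters of the MV-reduct; $\mathrm{Spec_M}\mathbf A$ is the set of maximal proper filters; $\mathbf A/F$ embeds uniquely into $[0,1]$ and $x/F$ is identified with its image. Semisimple: MV-reduct is a subdirect product of simple MV-algebras. Natural embedding $n_{\mathbf A}(x)(F)=x/F$. A tense Pavelka algebra is $(\mathbf A,G,H)$ with $\mathbf A$ a Pavelka algebra and $G,H\colon A\to A$ such that for all $x,y\in A$ and all constants $\mathbf r$: (PT1) $G(x\wedge y)=G(x)\wedge G(y)$, $H(x\wedge y)=H(x)\wedge H(y)$; (PT2) $\mathbf r\rightarrow G(x)=G(\mathbf r\rightarrow x)$, $\mathbf r\rightarrow H(x)=H(\mathbf r\rightarrow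 x)$; (PT3) $\neg H(\neg G(x))\le x$ and $\neg G(\neg H(x))\le x$. A time frame is a pair $(T,R)$ with $T$ a set and $R\colon T\times T\to[0,1]$; $R^{-1}(s,t)=R(t,s)$. For $S\colon T\times T\to[0,1]$, $f_S\colon[0,1]^T\to[0,1]^T$, $f_S(x)(t)=\bigwedge_{s\in T}(S(s,t)\rightarrow x(s))$. *)

From Stdlib Require Import Reals Lra QArith Qreals ClassicalEpsilon.
Open Scope R_scope.

Definition I01 : Type := {x : R | 0 <= x <= 1}.
Definition rat01 : Type := {r : R | (exists q : Q, Q2R q = r) /\ 0 <= r <= 1}.

Lemma Q2R_0 : Q2R 0%Q = 0.
Proof. unfold Q2R; simpl; lra. Qed.
Lemma Q2R_1 : Q2R 1%Q = 1.
Proof. unfold Q2R; simpl; field. Qed.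

Definition q0 : rat01 :=
  exist _ 0 (conj (ex_intro _ 0%Q Q2R_0) (conj (Rle_refl 0) Rle_0_1)).

Lemma oplus01_range (x y : I01) :
  0 <= Rmin (proj1_sig x + proj1_sig y) 1 <= 1.
Proof.
  destruct x as [x Hx], y as [y Hy]; simpl.
  unfold Rmin; destruct (Rle_dec (x + y) 1); lra.
Qed.
Lemma neg01_range (x : I01) : 0 <= 1 - proj1_sig x <= 1.
Proof. destruct x as [x Hx]; simpl; lra. Qed.

Definition i_oplus (x y : I01) : I01 := exist _ _ (oplus01_range x y).
Definition i_neg (x : I01) : I01 := exist _ _ (neg01_range x).
Definition i_const (r : rat01) : I01 := exist _ (proj1_sig r) (proj2 (proj2_sig r)).
Definition i_one : I01 := exist _ 1 (conj Rle_0_1 (Rle_refl 1)).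
Definition i_imp (x y : I01) : I01 := i_oplus (i_neg x) y.

Definition mv_one {A : Type} (neg : A -> A) (zero : A) : A := neg zero.
Definition mv_mul {A : Type} (oplus : A -> A -> A) (neg : A -> A) (x y : A) : A :=
  neg (oplus (neg x) (neg y)).
Definition mv_imp {A : Type} (oplus : A -> A -> A) (neg : A -> A) (x y : A) : A :=
  oplus (neg x) y.
Definition mv_join {A : Type} (oplus : A -> A -> A) (neg : A -> A) (x y : A) : A :=
  oplus (neg (oplus (neg x) y)) y.
Definition mv_meet {A : Type} (oplus : A -> A -> A) (neg : A -> A) (x y : A) : A :=
  neg (mv_join oplus neg (neg x) (neg y)).
Definition mv_le {A : Type} (oplus : A -> A -> A) (neg : A -> A) (zero : A) (x y : A) : Prop :=
  oplus (neg x) y = mv_one neg zero.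

Definition is_MV {A : Type} (oplus : A -> A -> A) (neg : A -> A) (zero : A) : Prop :=
  (forall x y z, oplus x (oplus y z) = oplus (oplus x y) z) /\
  (forall x y, oplus x y = oplus y x) /\
  (forall x, oplus x zero = x) /\
  (forall x, neg (neg x) = x) /\
  (forall x, oplus x (neg zero) = neg zero) /\
  (forall x y, oplus (neg (oplus (neg x) y)) y = oplus (neg (oplus (neg y) x)) x).

Definition MV_hom {A B : Type} (oplus : A -> A -> A) (neg : A -> A) (zero : A)
  (oplus' : B -> B -> B) (neg' : B -> B) (zero' : B) (h : A -> B) : Prop :=
  (forall x y, h (oplus x y) = oplus' (h x) (h y)) /\
  (forall x, h (neg x) = neg' (h x)) /\
  h zero = zero'.

Definition is_filter {A : Type} (oplus : A -> A -> A) (neg : A -> A) (zero : A)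
  (F : A -> Prop) : Prop :=
  F (mv_one neg zero) /\
  (forall x y, F x -> mv_le oplus neg zero x y -> F y) /\
  (forall x y, F x -> F y -> F (mv_mul oplus neg x y)).

Definition proper_filter {A : Type} (oplus : A -> A -> A) (neg : A -> A) (zero : A)
  (F : A -> Prop) : Prop :=
  is_filter oplus neg zero F /\ exists x, ~ F x.

Definition maximal_filter {A : Type} (oplus : A -> A -> A) (neg : A -> A) (zero : A)
  (F : A -> Prop) : Prop :=
  proper_filter oplus neg zero F /\
  forall G, proper_filter oplus neg zero G -> (forall x, F x -> G x) -> forall x, G x -> F x.

Definition simple_MV {A : Type} (oplus : A -> A -> A) (neg : A -> A) (zero : A) : Prop :=
  is_MV oplus neg zero /\ zero <> mv_one neg zero /\
  forall F, is_filter oplus neg zero F ->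
    (forall x, F x -> x = mv_one neg zero) \/ (forall x, F x).

(** semisimple: subdirect product of simple MV-algebras *)
Definition semisimple {A : Type} (oplus : A -> A -> A) (neg : A -> A) (zero : A) : Prop :=
  exists (I : Type) (B : I -> Type) (boplus : forall i, B i -> B i -> B i)
         (bneg : forall i, B i -> B i) (bzero : forall i, B i) (h : forall i, A -> B i),
    (forall i, simple_MV (boplus i) (bneg i) (bzero i)) /\
    (forall i, MV_hom oplus neg zero (boplus i) (bneg i) (bzero i) (h i)) /\
    (forall i (b : B i), exists a, h i a = b) /\
    (forall x y, (forall i, h i x = h i y) -> x = y).

(** * Pavelka algebras: operations oplus, neg and constants c : rat01 -> A;
    the MV zero is the constant c q0 *)
Definition is_pavelka {A : Type} (oplus : A -> A -> A) (neg : A -> A) (c : rat01 -> A) : Prop :=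
  is_MV oplus neg (c q0) /\
  (forall r s t : rat01, Rmin (proj1_sig r + proj1_sig s) 1 = proj1_sig t ->
       oplus (c r) (c s) = c t) /\
  (forall r s : rat01, 1 - proj1_sig r = proj1_sig s -> neg (c r) = c s).

Definition pavelka_hom {A B : Type} (oplus : A -> A -> A) (neg : A -> A) (c : rat01 -> A)
  (oplus' : B -> B -> B) (neg' : B -> B) (c' : rat01 -> B) (h : A -> B) : Prop :=
  (forall x y, h (oplus x y) = oplus' (h x) (h y)) /\
  (forall x, h (neg x) = neg' (h x)) /\
  (forall r, h (c r) = c' r).

Definition is_tense_pavelka {A : Type} (oplus : A -> A -> A) (neg : A -> A) (c : rat01 -> A)
  (G H : A -> A) : Prop :=
  is_pavelka oplus neg c /\
  (forall x y, G (mv_meet oplus neg x y) = mv_meet oplus neg (G x) (G y)) /\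
  (forall x y, H (mv_meet oplus neg x y) = mv_meet oplus neg (H x) (H y)) /\
  (forall (r : rat01) x, mv_imp oplus neg (c r) (G x) = G (mv_imp oplus neg (c r) x)) /\
  (forall (r : rat01) x, mv_imp oplus neg (c r) (H x) = H (mv_imp oplus neg (c r) x)) /\
  (forall x, mv_le oplus neg (c q0) (neg (H (neg (G x)))) x) /\
  (forall x, mv_le oplus neg (c q0) (neg (G (neg (H x)))) x).

Definition pw_oplus (T : Type) (x y : T -> I01) : T -> I01 := fun t => i_oplus (x t) (y t).
Definition pw_neg (T : Type) (x : T -> I01) : T -> I01 := fun t => i_neg (x t).
Definition pw_const (T : Type) (r : rat01) : T -> I01 := fun _ => i_const r.

Definition is_inf01 {I : Type} (f : I -> I01) (m : I01) : Prop :=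
  (forall i, proj1_sig m <= proj1_sig (f i)) /\
  (forall m' : I01, (forall i, proj1_sig m' <= proj1_sig (f i)) -> proj1_sig m' <= proj1_sig m).
Definition Iinf {I : Type} (f : I -> I01) : I01 :=
  epsilon (inhabits i_one) (is_inf01 f).

Definition Rinv_frame {T : Type} (S : T -> T -> I01) : T -> T -> I01 := fun s t => S t s.
Definition f_S {T : Type} (S : T -> T -> I01) (x : T -> I01) : T -> I01 :=
  fun t => Iinf (fun s => i_imp (S s t) (x s)).

Definition SpecM {A : Type} (oplus : A -> A -> A) (neg : A -> A) (c : rat01 -> A) : Type :=
  {F : A -> Prop | maximal_filter oplus neg (c q0) F}.

(** h is (the composite A -> A/F -> [0,1] of) the embedding of A/F into [0,1] *)
Definition quot_hom {A : Type} (oplus : A -> A -> A) (neg : A -> A) (c : rat01 -> A)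
  (F : A -> Prop) (h : A -> I01) : Prop :=
  pavelka_hom oplus neg c i_oplus i_neg i_const h /\
  (forall x, proj1_sig (h x) = 1 <-> F x).

(** x/F, identified with its image in [0,1] *)
Definition quot {A : Type} (oplus : A -> A -> A) (neg : A -> A) (c : rat01 -> A)
  (F : A -> Prop) (x : A) : I01 :=
  epsilon (inhabits (fun _ : A => i_one)) (quot_hom oplus neg c F) x.

Definition nat_emb {A : Type} (oplus : A -> A -> A) (neg : A -> A) (c : rat01 -> A)
  (x : A) : SpecM oplus neg c -> I01 :=
  fun F => quot oplus neg c (proj1_sig F) x.

Definition canon_frame {A : Type} (oplus : A -> A -> A) (neg : A -> A) (c : rat01 -> A)
  (G : A -> A) : SpecM oplus neg c -> SpecM oplus neg c -> I01 :=
  fun F F' => Iinf (fun a : A =>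
    i_imp (quot oplus neg c (proj1_sig F') (G a)) (quot oplus neg c (proj1_sig F) a)).

(* (i) is a pointwise computation in [0,1]: [f_S] is an infimum of maps [x |-> S(s,t) -> x(s)],
   which preserve binary meets and commute with [r -> _], and (PT3) holds because [R] and
   [R^-1] are read in opposite directions.

   (ii) For a maximal filter [F], prelinearity makes [F] prime, so for each [x] one of
   [r -> x], [x -> r] lies in [F] for every rational constant [r]; the rationals of the first
   kind form a Dedekind cut whose supremum realises [x/F], and [F] is the kernel of [x |-> x/F].
   Semisimplicity makes these quotient maps jointly order-reflecting, so [n_A] is injective.
   The inequality [(G x)/F <= R(F',F) -> x/F'] is immediate from the definition of [R].
   Conversely, if [(G x)/F < r], put [y = r -> x] and [P = not H not]; by the adjunction
   between [P] and [G] the elements [d -> P w * not y], [w] in [F], generate a proper filter for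
   a small rational [d > 0], and a maximal filter [F'] above it (Zorn) satisfies
   [R(F',F) >= y/F' + d], which pushes the infimum defining [f_R] below [r].  The case of [H]
   follows by symmetry, since (PT3) gives [R_H(F,F') = R_G(F',F)]. *)

From Stdlib Require Import Reals QArith Qreals ClassicalEpsilon Lra Lia Classical
  FunctionalExtensionality ProofIrrelevance.
From mathcomp Require classical_sets.

Section MVAlgebra.
Context {A : Type} {op : A -> A -> A} {ng : A -> A} {z : A} (HMV : is_MV op ng z).

Local Notation one := (mv_one ng z).
Local Notation le := (mv_le op ng z).
Local Notation mul := (mv_mul op ng).
Local Notation imp := (mv_imp op ng).
Local Notation join := (mv_join op ng).
Local Notation meet := (mv_meet op ng).

Lemma mv_addA x y w : op x (op y w) = op (op x y) w. Proof. apply HMV. Qed.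
Lemma mv_addC x y : op x y = op y x. Proof. apply HMV. Qed.
Lemma mv_add0 x : op x z = x. Proof. apply HMV. Qed.
Lemma mv_negK x : ng (ng x) = x. Proof. apply HMV. Qed.
Lemma mv_add1 x : op x one = one. Proof. apply HMV. Qed.
Lemma mv_joinC x y : join x y = join y x. Proof. apply HMV. Qed.

Lemma mv_neg1 : ng one = z. Proof. apply mv_negK. Qed.
Lemma mv_add0l x : op z x = x. Proof. rewrite mv_addC; apply mv_add0. Qed.
Lemma mv_add1l x : op one x = one. Proof. rewrite mv_addC; apply mv_add1. Qed.
Lemma mv_addNl x : op (ng x) x = one.
Proof.
  pose proof (mv_joinC x one) as E; unfold mv_join in E.
  rewrite mv_add1, mv_neg1, mv_add0l in E. symmetry; exact E.
Qed.

Lemma mv_le_refl x : le x x. Proof. apply mv_addNl. Qed.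
Lemma mv_le_addr x w : le x (op x w).
Proof. unfold mv_le. rewrite mv_addA, mv_addNl, mv_add1l. reflexivity. Qed.
Lemma mv_le_addE x y : le x y -> y = op x (ng (op (ng y) x)).
Proof.
  unfold mv_le; intro H. rewrite mv_addC. fold (join y x).
  rewrite mv_joinC; unfold mv_join. rewrite H, mv_neg1, mv_add0l. reflexivity.
Qed.
Lemma mv_leP x y : le x y <-> exists w, y = op x w.
Proof.
  split; [intro H; eexists; apply mv_le_addE, H | intros [w ->]; apply mv_le_addr].
Qed.
Lemma mv_le_trans x y w : le x y -> le y w -> le x w.
Proof.
  rewrite !mv_leP. intros [a ->] [b ->]. exists (op a b). apply eq_sym, mv_addA.
Qed.
Lemma mv_le_antisym x y : le x y -> le y x -> x = y.
Proof.
  intros Hxy Hyx. rewrite (mv_le_addE x y Hxy). unfold mv_le in Hyx.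
  rewrite Hyx, mv_neg1, mv_add0. reflexivity.
Qed.
Lemma mv_le1 x : le x one. Proof. apply mv_add1. Qed.
Lemma mv_le0 x : le z x. Proof. unfold mv_le. fold one. apply mv_add1l. Qed.
Lemma mv_le1_eq x : le one x -> x = one.
Proof. intro H. apply mv_le_antisym; [apply mv_le1 | exact H]. Qed.
Lemma mv_le0_eq x : le x z -> x = z.
Proof. intro H. apply mv_le_antisym; [exact H | apply mv_le0]. Qed.

Lemma mv_add_monol x y w : le x y -> le (op x w) (op y w).
Proof.
  rewrite !mv_leP. intros [a ->]. exists a. rewrite <- !mv_addA, (mv_addC w a). reflexivity.
Qed.
Lemma mv_add_monor x y w : le x y -> le (op w x) (op w y).
Proof. rewrite (mv_addC w x), (mv_addC w y). apply mv_add_monol. Qed.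
Lemma mv_neg_anti x y : le x y -> le (ng y) (ng x).
Proof. unfold mv_le. rewrite mv_negK, mv_addC. auto. Qed.
Lemma mv_neg_antiK x y : le (ng y) (ng x) -> le x y.
Proof. intro H. apply mv_neg_anti in H. rewrite !mv_negK in H. exact H. Qed.

Lemma mv_mulC x y : mul x y = mul y x. Proof. unfold mv_mul. rewrite mv_addC. auto. Qed.
Lemma mv_mulA x y w : mul x (mul y w) = mul (mul x y) w.
Proof. unfold mv_mul. rewrite !mv_negK, mv_addA. auto. Qed.
Lemma mv_mul1 x : mul x one = x.
Proof. unfold mv_mul. rewrite mv_neg1, mv_add0, mv_negK. auto. Qed.
Lemma mv_mulN x : mul x (ng x) = z.
Proof. unfold mv_mul. rewrite mv_negK, mv_addNl, mv_neg1. auto. Qed.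
Lemma mv_mulACA p q r s : mul (mul p q) (mul r s) = mul (mul p r) (mul q s).
Proof.
  rewrite <- mv_mulA, (mv_mulA q r s), (mv_mulC q r), <- mv_mulA, mv_mulA. auto.
Qed.

Lemma mv_residuation x y w : le (mul x y) w <-> le x (imp y w).
Proof. unfold mv_le, mv_mul, mv_imp. rewrite mv_negK, mv_addA. tauto. Qed.

Lemma mv_mul_monol x y w : le x y -> le (mul x w) (mul y w).
Proof. intro H. apply mv_neg_anti, mv_add_monol, mv_neg_anti, H. Qed.
Lemma mv_mul_monor x y w : le x y -> le (mul w x) (mul w y).
Proof. rewrite (mv_mulC w x), (mv_mulC w y). apply mv_mul_monol. Qed.
Lemma mv_mul_mono2 x y x' y' : le x y -> le x' y' -> le (mul x x') (mul y y').
Proof. intros; eapply mv_le_trans; [apply mv_mul_monol | apply mv_mul_monor]; eauto. Qed.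
Lemma mv_mul_lel x y : le (mul x y) x.
Proof. apply mv_residuation. unfold mv_imp. rewrite mv_addC. apply mv_le_addr. Qed.
Lemma mv_mul_ler x y : le (mul x y) y.
Proof. rewrite mv_mulC. apply mv_mul_lel. Qed.
Lemma mv_imp_monor x y w : le x y -> le (imp w x) (imp w y).
Proof. apply mv_add_monor. Qed.
Lemma mv_modus_ponens a b : le (mul a (imp a b)) b.
Proof. rewrite mv_mulC. apply mv_residuation, mv_le_refl. Qed.
Lemma mv_imp_trans x y w : le (mul (imp x y) (imp y w)) (imp x w).
Proof.
  apply (proj1 (mv_residuation _ _ _)). rewrite mv_mulC, mv_mulA.
  eapply mv_le_trans; [apply mv_mul_monol, mv_modus_ponens | apply mv_modus_ponens].
Qed.
Lemma mv_joinr x y : le y (join x y).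
Proof. unfold mv_join. rewrite mv_addC. apply mv_le_addr. Qed.
Lemma mv_joinl x y : le x (join x y).
Proof. rewrite mv_joinC. apply mv_joinr. Qed.
Lemma mv_join_idPl v y : le y v -> join v y = v.
Proof. intro H. rewrite mv_joinC. unfold mv_join. rewrite H, mv_neg1, mv_add0l. auto. Qed.
Lemma mv_join_lub x y t : le x t -> le y t -> le (join x y) t.
Proof.
  intros Hx Hy. destruct (proj1 (mv_leP y t) Hy) as [w Ht].
  unfold mv_le.
  assert (E : ng (join x y) = mul (ng y) (op (ng x) y)).
  { unfold mv_join, mv_mul. rewrite mv_negK, mv_addC. auto. }
  assert (E2 : op y (mul (ng y) (op (ng x) y)) = join (op (ng x) y) y).
  { unfold mv_join, mv_mul. rewrite mv_negK, mv_addC. f_equal. f_equal. apply mv_addC. }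
  rewrite E, mv_addC, Ht, (mv_addC y w), <- mv_addA, E2,
    mv_join_idPl by (rewrite mv_addC; apply mv_le_addr).
  rewrite mv_addC, <- mv_addA, <- Ht. apply Hx.
Qed.
Lemma mv_join_mono2 x y x' y' : le x x' -> le y y' -> le (join x y) (join x' y').
Proof.
  intros; apply mv_join_lub; eapply mv_le_trans; eauto; [apply mv_joinl | apply mv_joinr].
Qed.

Lemma mv_negJ x y : ng (join x y) = meet (ng x) (ng y).
Proof. unfold mv_meet. rewrite !mv_negK. auto. Qed.
Lemma mv_meetC x y : meet x y = meet y x.
Proof. unfold mv_meet. rewrite mv_joinC. auto. Qed.
Lemma mv_meetl x y : le (meet x y) x.
Proof. apply mv_neg_antiK. unfold mv_meet. rewrite mv_negK. apply mv_joinl. Qed.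
Lemma mv_meetr x y : le (meet x y) y.
Proof. rewrite mv_meetC. apply mv_meetl. Qed.
Lemma mv_meet_glb x y t : le t x -> le t y -> le t (meet x y).
Proof.
  intros. apply mv_neg_antiK. unfold mv_meet. rewrite mv_negK.
  apply mv_join_lub; apply mv_neg_anti; auto.
Qed.
Lemma mv_meet_idPl x y : le x y -> meet x y = x.
Proof.
  intro H. apply mv_le_antisym; [apply mv_meetl | apply mv_meet_glb; auto; apply mv_le_refl].
Qed.
Lemma mv_meetE a b : meet a b = mul (op a (ng b)) b.
Proof. unfold mv_meet, mv_join, mv_mul. rewrite !mv_negK. auto. Qed.
Lemma mv_meetE' a b : meet a b = mul a (op (ng a) b).
Proof. rewrite mv_meetC, mv_meetE, mv_mulC, mv_addC. auto. Qed.
Lemma mv_mul_le_meet x y : le (mul x y) (meet x y).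
Proof. apply mv_meet_glb; [apply mv_mul_lel | apply mv_mul_ler]. Qed.

Lemma mv_imp_add a b c d : le (mul (imp a b) (imp c d)) (imp (op a c) (op b d)).
Proof.
  assert (Hshift : forall x y w, le (mul (op x y) w) (op x (mul y w))).
  { intros x y w. apply (proj2 (mv_residuation _ _ _)). unfold mv_imp.
    rewrite (mv_addA (ng w) x), (mv_addC (ng w) x), <- mv_addA. apply mv_add_monor.
    rewrite mv_addC. apply mv_joinl. }
  apply (proj1 (mv_residuation _ _ _)).
  apply mv_le_trans with (mul (op a d) (imp a b)).
  - rewrite (mv_mulC (imp a b) (imp c d)), (mv_mulC (mul _ _) (op a c)), mv_mulA.
    apply mv_mul_monol. eapply mv_le_trans; [apply Hshift | apply mv_add_monor, mv_modus_ponens].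
  - rewrite (mv_addC a d), (mv_addC b d).
    eapply mv_le_trans; [apply Hshift | apply mv_add_monor, mv_modus_ponens].
Qed.
Lemma mv_mul_joinr x y w : le (mul x (join y w)) (join (mul x y) (mul x w)).
Proof.
  rewrite mv_mulC. apply (proj2 (mv_residuation _ _ _)).
  apply mv_join_lub; apply (proj1 (mv_residuation _ _ _)); rewrite mv_mulC;
    [apply mv_joinl | apply mv_joinr].
Qed.
Lemma mv_meet_joinl y w v : le (meet (join y w) v) (join (meet y v) (meet w v)).
Proof.
  rewrite (mv_meetE' (join y w) v), mv_mulC.
  eapply mv_le_trans; [apply mv_mul_joinr | apply mv_join_mono2].
  - rewrite (mv_meetE' y v), mv_mulC. apply mv_mul_monor, mv_add_monol, mv_neg_anti, mv_joinl.
  - rewrite (mv_meetE' w v), mv_mulC. apply mv_mul_monor, mv_add_monol, mv_neg_anti, mv_joinr.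
Qed.
Lemma mv_mul_addN x y : mul (op x y) (ng x) = meet y (ng x).
Proof. rewrite mv_meetE, mv_negK, mv_addC. auto. Qed.
Lemma mv_add_mulN x w : op x (mul w (ng x)) = join w x.
Proof. unfold mv_join, mv_mul. rewrite !mv_negK, mv_addC. auto. Qed.
(* [x + u = x + (u /\ not x)] reduces this to the distributivity of meet over join. *)
Lemma mv_add_joinr x y w : le (op x (join y w)) (join (op x y) (op x w)).
Proof.
  set (m := join (op x y) (op x w)).
  assert (Hx : le x m) by (eapply mv_le_trans; [apply mv_le_addr | apply mv_joinl]).
  assert (Hcut : op x (join y w) = op x (meet (join y w) (ng x))).
  { rewrite <- mv_mul_addN, mv_add_mulN, (mv_join_idPl (op x _) x); [auto | apply mv_le_addr]. }
  rewrite Hcut. eapply mv_le_trans; [apply mv_add_monor, mv_meet_joinl |].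
  apply mv_le_trans with (op x (mul m (ng x))).
  - apply mv_add_monor. apply mv_join_lub; rewrite <- mv_mul_addN; apply mv_mul_monol;
      [apply mv_joinl | apply mv_joinr].
  - rewrite mv_add_mulN, mv_join_idPl by exact Hx. apply mv_le_refl.
Qed.
Lemma mv_mul_meetr x y w : le (meet (mul x y) (mul x w)) (mul x (meet y w)).
Proof.
  pose proof (mv_neg_anti _ _ (mv_add_joinr (ng x) (ng y) (ng w))) as H.
  rewrite mv_negJ in H. unfold mv_mul at 3. unfold mv_meet at 2. rewrite mv_negK. exact H.
Qed.
(* Both sides of the meet are [(x \/ y) * not _], so it lies below [(x \/ y) * not (x \/ y)]. *)
Lemma mv_meet_mulN x y : meet (mul x (ng y)) (mul y (ng x)) = z.
Proof.
  apply mv_le0_eq.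
  assert (E1 : mul x (ng y) = mul (join x y) (ng y)).
  { rewrite <- (mv_add_mulN y x), mv_mul_addN, mv_meet_idPl; [auto | apply mv_mul_ler]. }
  assert (E2 : mul y (ng x) = mul (join x y) (ng x)).
  { rewrite mv_joinC, <- (mv_add_mulN x y), mv_mul_addN, mv_meet_idPl;
      [auto | apply mv_mul_ler]. }
  rewrite E1, E2. eapply mv_le_trans; [apply mv_mul_meetr |].
  rewrite <- mv_negJ, mv_joinC, mv_mulN. apply mv_le_refl.
Qed.
Lemma mv_prelinear x y : join (imp x y) (imp y x) = one.
Proof.
  assert (E : forall a b, imp a b = ng (mul a (ng b))).
  { intros; unfold mv_imp, mv_mul. rewrite !mv_negK. auto. }
  rewrite !E.
  replace (join (ng (mul x (ng y))) (ng (mul y (ng x))))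
    with (ng (meet (mul x (ng y)) (mul y (ng x)))) by (unfold mv_meet; rewrite mv_negK; auto).
  rewrite mv_meet_mulN. reflexivity.
Qed.

Fixpoint mv_pow (x : A) (n : nat) : A :=
  match n with O => one | S n => mul x (mv_pow x n) end.

Lemma mv_powD x n m : mv_pow x (n + m) = mul (mv_pow x n) (mv_pow x m).
Proof.
  induction n; simpl; [rewrite mv_mulC, mv_mul1 | rewrite IHn, mv_mulA]; auto.
Qed.
Lemma mv_pow_mono x y n : le x y -> le (mv_pow x n) (mv_pow y n).
Proof. intro H; induction n; simpl; [apply mv_le_refl | apply mv_mul_mono2; auto]. Qed.
Lemma mv_pow_anti x n m : (n <= m)%nat -> le (mv_pow x m) (mv_pow x n).
Proof.
  induction 1; [apply mv_le_refl |].
  eapply mv_le_trans; [apply mv_mul_ler | apply IHle].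
Qed.
Lemma mv_imp_pow a b n : le (mv_pow (imp a b) n) (imp (mv_pow a n) (mv_pow b n)).
Proof.
  induction n; simpl.
  - unfold mv_imp. rewrite mv_neg1, mv_add0l. apply mv_le_refl.
  - eapply mv_le_trans; [apply mv_mul_monor, IHn |].
    apply (proj1 (mv_residuation _ _ _)).
    rewrite mv_mulACA, (mv_mulC (imp a b) a), (mv_mulC (imp _ _) (mv_pow a n)).
    apply mv_mul_mono2; apply mv_modus_ponens.
Qed.
Lemma mv_pow_join a b i j : le (mv_pow (join a b) (i + j)) (join (mv_pow a i) (mv_pow b j)).
Proof.
  revert j. induction i as [|i IHi]; intros j.
  - eapply mv_le_trans; [apply mv_le1 | apply mv_joinl].
  - induction j as [|j IHj].
    + eapply mv_le_trans; [apply mv_le1 | apply mv_joinr].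
    + replace (S i + S j)%nat with (S (i + S j)) by lia. simpl mv_pow.
      assert (IHj' : le (mv_pow (join a b) (i + S j)) (join (mv_pow a (S i)) (mv_pow b j))).
      { replace (i + S j)%nat with (S i + j)%nat by lia. exact IHj. }
      eapply mv_le_trans; [apply mv_mul_monor, mv_meet_glb; [apply IHi | exact IHj'] |].
      rewrite mv_mulC. eapply mv_le_trans; [apply mv_mul_joinr | apply mv_join_lub].
      * apply mv_le_trans with (mul a (join (mv_pow a i) (mv_pow b (S j)))).
        { rewrite (mv_mulC _ a). apply mv_mul_monor, mv_meetl. }
        eapply mv_le_trans; [apply mv_mul_joinr | apply mv_join_mono2].
        apply mv_le_refl. apply mv_mul_ler.
      * apply mv_le_trans with (mul b (join (mv_pow a (S i)) (mv_pow b j))).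
        { rewrite (mv_mulC _ b). apply mv_mul_monor, mv_meetr. }
        eapply mv_le_trans; [apply mv_mul_joinr | apply mv_join_mono2].
        apply mv_mul_ler. apply mv_le_refl.
Qed.
End MVAlgebra.

Section Filters.
Context {A : Type} {op : A -> A -> A} {ng : A -> A} {z : A} (HMV : is_MV op ng z).

Local Notation one := (mv_one ng z).
Local Notation le := (mv_le op ng z).
Local Notation mul := (mv_mul op ng).
Local Notation imp := (mv_imp op ng).
Local Notation join := (mv_join op ng).
Local Notation meet := (mv_meet op ng).
Local Notation pow := (@mv_pow A op ng z).

Section Filter.
Context {F : A -> Prop} (HF : is_filter op ng z F).

Lemma filter_one : F one. Proof. apply HF. Qed.
Lemma filter_up x y : F x -> le x y -> F y. Proof. apply HF. Qed.
Lemma filter_mul x y : F x -> F y -> F (mul x y). Proof. apply HF. Qed.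
Lemma filter_meet x y : F x -> F y -> F (meet x y).
Proof.
  intros. apply filter_up with (mul x y); [apply filter_mul; auto | apply (mv_mul_le_meet HMV)].
Qed.
Lemma filter_imp_trans x y w : F (imp x y) -> F (imp y w) -> F (imp x w).
Proof.
  intros. apply filter_up with (mul (imp x y) (imp y w));
    [apply filter_mul; auto | apply (mv_imp_trans HMV)].
Qed.
Lemma filter_pow x n : F x -> F (pow x n).
Proof. intro H. induction n; simpl; [apply filter_one | apply filter_mul; auto]. Qed.
Lemma proper_filter_zero : (exists x, ~ F x) -> ~ F z.
Proof.
  intros [x Hx] Hz. apply Hx, filter_up with z; [exact Hz | apply (mv_le0 HMV)].
Qed.
End Filter.

Lemma filter_generated_by_pow F (t : A -> A) : is_filter op ng z F ->
  (forall w w', le w w' -> le (t w) (t w')) ->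
  is_filter op ng z (fun x => exists w n, F w /\ le (pow (t w) n) x).
Proof.
  intros HF Ht. split; [| split].
  - exists one, O. split; [apply (filter_one HF) | apply (mv_le_refl HMV)].
  - intros x y [w [n [Hw Hl]]] Hxy. exists w, n. split; auto. eapply (mv_le_trans HMV); eauto.
  - intros x y [w [n [Hw Hl]]] [w' [m [Hw' Hl']]]. exists (meet w w'), (n + m)%nat.
    split; [apply (filter_meet HF); auto |]. rewrite (mv_powD HMV). apply (mv_mul_mono2 HMV).
    + eapply (mv_le_trans HMV); [| exact Hl]. apply (mv_pow_mono HMV), Ht, (mv_meetl HMV).
    + eapply (mv_le_trans HMV); [| exact Hl']. apply (mv_pow_mono HMV), Ht, (mv_meetr HMV).
Qed.

(* If a maximal filter misses [a], then the filter generated by it and [a] is improper. *)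
Lemma maximal_filter_avoid F a : maximal_filter op ng z F -> ~ F a ->
  exists f n, F f /\ mul f (pow a n) = z.
Proof.
  intros [[HF Hp] Hmax] Ha.
  set (G := fun x => exists f n, F f /\ le (mul f (pow a n)) x).
  assert (HG : is_filter op ng z G).
  { split; [|split].
    - exists one, O. split; [apply filter_one; auto |]. simpl.
      rewrite (mv_mul1 HMV). apply (mv_le_refl HMV).
    - intros x y [f [n [Hf Hl]]] Hxy. exists f, n. split; auto. eapply (mv_le_trans HMV); eauto.
    - intros x y [f [n [Hf Hl]]] [g [m [Hg Hm]]]. exists (mul f g), (n + m)%nat.
      split; [apply filter_mul; auto |].
      rewrite (mv_powD HMV), (mv_mulACA HMV). apply (mv_mul_mono2 HMV); auto. }
  destruct (classic (exists x, ~ G x)) as [Hpr|Hnp].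
  - exfalso. apply Ha, (Hmax G (conj HG Hpr)).
    + intros x Hx. exists x, O. split; auto. simpl. rewrite (mv_mul1 HMV). apply (mv_le_refl HMV).
    + exists one, 1%nat. split; [apply filter_one; auto |]. simpl.
      rewrite (mv_mul1 HMV), (mv_mulC HMV), (mv_mul1 HMV). apply (mv_le_refl HMV).
  - assert (Gz : G z) by (apply NNPP; intro; apply Hnp; eauto).
    destruct Gz as [f [n [Hf Hl]]]. exists f, n. split; auto. apply (mv_le0_eq HMV); auto.
Qed.

Lemma maximal_filter_prime F a b : maximal_filter op ng z F -> F (join a b) -> F a \/ F b.
Proof.
  intros HM Hj. apply NNPP. intros Hab. apply not_or_and in Hab as [Ha Hb].
  destruct (maximal_filter_avoid F a HM Ha) as [f [n [Hf Ef]]].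
  destruct (maximal_filter_avoid F b HM Hb) as [g [m [Hg Eg]]].
  destruct HM as [[HF Hp] _].
  set (e := mul f g). set (k := (n + m)%nat).
  assert (Ea : le (mul e (pow a k)) z).
  { apply (mv_le_trans HMV) with (mul f (pow a n)); [| rewrite Ef; apply (mv_le_refl HMV)].
    apply (mv_mul_mono2 HMV); [apply (mv_mul_lel HMV) | apply (mv_pow_anti HMV); lia]. }
  assert (Eb : le (mul e (pow b k)) z).
  { apply (mv_le_trans HMV) with (mul g (pow b m)); [| rewrite Eg; apply (mv_le_refl HMV)].
    apply (mv_mul_mono2 HMV); [apply (mv_mul_ler HMV) | apply (mv_pow_anti HMV); lia]. }
  apply (proper_filter_zero HF Hp). apply (filter_up HF) with (mul e (pow (join a b) (k + k))).
  - apply (filter_mul HF); [apply (filter_mul HF) | apply (filter_pow HF)]; auto.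
  - eapply (mv_le_trans HMV); [apply (mv_mul_monor HMV), (mv_pow_join HMV) |].
    eapply (mv_le_trans HMV); [apply (mv_mul_joinr HMV) | apply (mv_join_lub HMV); auto].
Qed.

Lemma maximal_filter_linear F a b : maximal_filter op ng z F -> F (imp a b) \/ F (imp b a).
Proof.
  intro HM. apply maximal_filter_prime; auto.
  rewrite (mv_prelinear HMV). apply filter_one, HM.
Qed.
End Filters.

Open Scope R_scope.

Local Notation val x := (proj1_sig x).

Lemma I01_range (x : I01) : 0 <= val x <= 1. Proof. exact (proj2_sig x). Qed.
Lemma I01_eq (x y : I01) : val x = val y -> x = y.
Proof.
  destruct x as [x Hx], y as [y Hy]; simpl; intro E; subst. f_equal; apply proof_irrelevance.
Qed.
Lemma I01_funext {T : Type} (x y : T -> I01) : (forall t, val (x t) = val (y t)) -> x = y.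
Proof. intro H. apply functional_extensionality. intro t. apply I01_eq, H. Qed.
Lemma i_imp_val a b : val (i_imp a b) = Rmin (1 - val a + val b) 1. Proof. reflexivity. Qed.

Ltac solve_minmax := unfold Rmin, Rmax in *; repeat match goal with
  | |- context [Rle_dec ?a ?b] => destruct (Rle_dec a b)
  | H : context [Rle_dec ?a ?b] |- _ => destruct (Rle_dec a b) end; lra.

(* The infimum is [1 - sup {1 - f i}], with [0] added to make the set nonempty. *)
Lemma is_inf01_exists {I : Type} (f : I -> I01) : exists m, is_inf01 f m.
Proof.
  set (E := fun r => r = 0 \/ exists i, r = 1 - val (f i)).
  assert (Hb : bound E).
  { exists 1. intros r [->|[i ->]]; [lra | pose proof (I01_range (f i)); lra]. }
  destruct (completeness E Hb) as [s [Hs1 Hs2]]; [exists 0; left; auto |].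
  assert (s0 : 0 <= s) by (apply Hs1; left; auto).
  assert (s1 : s <= 1).
  { apply Hs2. intros r [->|[i ->]]; [lra | pose proof (I01_range (f i)); lra]. }
  assert (Hm : 0 <= 1 - s <= 1) by lra.
  exists (exist _ (1 - s) Hm). split; simpl.
  - intro i. assert (1 - val (f i) <= s) by (apply Hs1; right; eauto). lra.
  - intros m' Hm'. assert (s <= 1 - val m'); [| lra].
    apply Hs2. intros r [->|[i ->]]; [pose proof (I01_range m') | pose proof (Hm' i)]; lra.
Qed.

Lemma Iinf_spec {I : Type} (f : I -> I01) : is_inf01 f (Iinf f).
Proof. unfold Iinf. apply epsilon_spec, is_inf01_exists. Qed.
Lemma Iinf_lb {I : Type} (f : I -> I01) i : val (Iinf f) <= val (f i).
Proof. apply (proj1 (Iinf_spec f)). Qed.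
Lemma Iinf_glb {I : Type} (f : I -> I01) (r : R) :
  r <= 1 -> (forall i, r <= val (f i)) -> r <= val (Iinf f).
Proof.
  intros H1 H2. destruct (Rle_lt_dec 0 r).
  - assert (Hm : 0 <= r <= 1) by lra. apply ((proj2 (Iinf_spec f)) (exist _ r Hm)), H2.
  - pose proof (I01_range (Iinf f)); lra.
Qed.
Lemma Iinf_le_cofinal {I J : Type} (f : I -> I01) (g : J -> I01) :
  (forall j, exists i, val (f i) <= val (g j)) -> val (Iinf f) <= val (Iinf g).
Proof.
  intro H. apply Iinf_glb; [pose proof (I01_range (Iinf f)); lra |].
  intro j. destruct (H j) as [i Hi]. eapply Rle_trans; [apply Iinf_lb | exact Hi].
Qed.
Lemma Iinf_le {I : Type} (f g : I -> I01) :
  (forall i, val (f i) <= val (g i)) -> val (Iinf f) <= val (Iinf g).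
Proof. intro H. apply Iinf_le_cofinal. intro i. exists i. apply H. Qed.

Section PowerAlgebra.
Variable T : Type.
Local Notation pop := (pw_oplus T).
Local Notation png := (pw_neg T).
Local Notation pc := (pw_const T).

Lemma power_is_pavelka : is_pavelka pop png pc.
Proof.
  split; [| split; intros; apply I01_funext; intro u; simpl; assumption].
  unfold is_MV, pw_oplus, pw_neg, pw_const.
  repeat split; intros; apply I01_funext; intro t; simpl;
  repeat match goal with |- context [proj1_sig ?e] =>
    generalize (I01_range e); generalize (proj1_sig e); intros end; solve_minmax.
Qed.

Lemma power_meet_val (x y : T -> I01) t :
  val (mv_meet pop png x y t) = Rmin (val (x t)) (val (y t)).
Proof.
  unfold mv_meet, mv_join, pw_oplus, pw_neg; simpl.
  pose proof (I01_range (x t)); pose proof (I01_range (y t)); solve_minmax.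
Qed.

Lemma f_S_meet (S : T -> T -> I01) x y :
  f_S S (mv_meet pop png x y) = mv_meet pop png (f_S S x) (f_S S y).
Proof.
  apply I01_funext; intro t. rewrite power_meet_val. unfold f_S.
  apply Rle_antisym.
  - apply Rmin_glb; apply Iinf_le; intro s; rewrite !i_imp_val, power_meet_val;
    pose proof (I01_range (x s)); pose proof (I01_range (y s));
    pose proof (I01_range (S s t)); solve_minmax.
  - apply Iinf_glb; [pose proof (I01_range (Iinf (fun s => i_imp (S s t) (x s)))); solve_minmax |].
    intro s. rewrite i_imp_val, power_meet_val.
    pose proof (Iinf_lb (fun s => i_imp (S s t) (x s)) s) as Hx.
    pose proof (Iinf_lb (fun s => i_imp (S s t) (y s)) s) as Hy.
    cbv beta in *; rewrite !i_imp_val in Hx, Hy.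
    pose proof (I01_range (x s)); pose proof (I01_range (y s)); pose proof (I01_range (S s t)).
    solve_minmax.
Qed.

Lemma f_S_const_imp (S : T -> T -> I01) (r : rat01) x :
  mv_imp pop png (pc r) (f_S S x) = f_S S (mv_imp pop png (pc r) x).
Proof.
  apply I01_funext; intro t. unfold mv_imp, pw_oplus, pw_neg, pw_const, f_S; simpl.
  set (I := val (Iinf (fun s => i_imp (S s t) (x s)))).
  set (K := val (Iinf (fun s => i_imp (S s t) (i_oplus (i_neg (i_const r)) (x s))))).
  assert (HI : 0 <= I <= 1) by apply I01_range.
  assert (HK : 0 <= K <= 1) by apply I01_range.
  pose proof (proj2 (proj2_sig r)) as Hr.
  apply Rle_antisym.
  - apply Iinf_glb; [solve_minmax |]. intro s. simpl.
    pose proof (Iinf_lb (fun s => i_imp (S s t) (x s)) s) as Hs. simpl in Hs. fold I in Hs.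
    pose proof (I01_range (x s)); pose proof (I01_range (S s t)); solve_minmax.
  - destruct (Rle_dec 1 (1 - val r + I)); [solve_minmax |].
    assert (K - 1 + val r <= I); [| solve_minmax].
    apply Iinf_glb; [lra |]. intro s.
    pose proof (Iinf_lb (fun s => i_imp (S s t) (i_oplus (i_neg (i_const r)) (x s))) s) as Hs.
    simpl in Hs |- *. fold K in Hs.
    pose proof (I01_range (x s)); pose proof (I01_range (S s t)); solve_minmax.
Qed.

Lemma f_S_conjugate (S : T -> T -> I01) x :
  mv_le pop png (pc q0) (png (f_S (Rinv_frame S) (png (f_S S x)))) x.
Proof.
  unfold mv_le, mv_one. apply I01_funext; intro t.
  unfold pw_oplus, pw_neg, pw_const, f_S, Rinv_frame; simpl.
  set (Hv := val (Iinf (fun s => i_imp (S t s) (i_neg (Iinf (fun s0 => i_imp (S s0 s) (x s0))))))).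
  assert (1 - val (x t) <= Hv).
  { apply Iinf_glb; [pose proof (I01_range (x t)); lra |]. intro s. simpl.
    pose proof (Iinf_lb (fun s0 => i_imp (S s0 s) (x s0)) t). simpl in *.
    pose proof (I01_range (Iinf (fun s0 => i_imp (S s0 s) (x s0)))).
    pose proof (I01_range (x t)); pose proof (I01_range (S t s)); solve_minmax. }
  pose proof (I01_range (x t)). assert (0 <= Hv <= 1) by apply I01_range. solve_minmax.
Qed.

Lemma frame_tense_pavelka (R : T -> T -> I01) :
  is_tense_pavelka pop png pc (f_S R) (f_S (Rinv_frame R)).
Proof.
  split; [apply power_is_pavelka |].
  repeat split; intros;
    solve [apply f_S_meet | apply f_S_const_imp | apply f_S_conjugate
          | apply (f_S_conjugate (Rinv_frame R))].
Qed.
End PowerAlgebra.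

(* Take [q = up (a n) / n] for some [n] with [n (b - a) > 1]. *)
Lemma Q_dense (a b : R) : a < b -> exists q : Q, a < Q2R q < b.
Proof.
  intro Hab. destruct (archimed_cor1 (b - a)) as [N [HN HN0]]; [lra |].
  destruct N as [|k]; [lia |].
  set (m := up (a * INR (S k))).
  exists (Qmake m (Pos.of_succ_nat k)).
  unfold Q2R; simpl. rewrite Znat.Zpos_P_of_succ_nat, <- Znat.Nat2Z.inj_succ, <- INR_IZR_INZ.
  destruct (archimed (a * INR (S k))) as [H1 H2]. fold m in H1, H2.
  assert (HN1 : 0 < INR (S k)) by (apply lt_0_INR; lia).
  split; apply Rmult_lt_reg_r with (INR (S k)); auto; rewrite Rmult_assoc, Rinv_l by lra;
    [lra |].
  assert (1 < (b - a) * INR (S k)); [| lra].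
  apply Rmult_lt_reg_r with (/ INR (S k)); [apply Rinv_0_lt_compat; auto |].
  rewrite Rmult_assoc, Rinv_r, Rmult_1_l, Rmult_1_r by lra. lra.
Qed.

Lemma rat01_range (r : rat01) : 0 <= val r <= 1. Proof. exact (proj2 (proj2_sig r)). Qed.
Lemma rat01_eq (r s : rat01) : val r = val s -> r = s.
Proof.
  destruct r as [r Hr], s as [s Hs]; simpl; intro E; subst. f_equal; apply proof_irrelevance.
Qed.
Lemma rat01_dense a b : 0 <= a -> a < b -> b <= 1 -> exists r : rat01, a < val r < b.
Proof.
  intros. destruct (Q_dense a b) as [q Hq]; auto.
  assert (Hr : (exists q' : Q, Q2R q' = Q2R q) /\ 0 <= Q2R q <= 1) by (split; eauto; lra).
  exists (exist (fun r => (exists q' : Q, Q2R q' = r) /\ 0 <= r <= 1) (Q2R q) Hr). simpl. lra.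
Qed.
Lemma rat01_approx_below a eps : 0 <= a <= 1 -> 0 < eps -> exists r : rat01, a - eps < val r <= a.
Proof.
  intros. destruct (Rle_lt_dec a 0) as [Ha0|Ha0]; [exists q0; simpl; lra |].
  destruct (rat01_dense (Rmax 0 (a - eps)) a) as [r Hr]; try solve_minmax.
  exists r. solve_minmax.
Qed.

Lemma rat_neg_prop (r : rat01) : (exists q : Q, Q2R q = 1 - val r) /\ 0 <= 1 - val r <= 1.
Proof.
  destruct r as [r [[q <-] Hr]]; simpl. split; [| lra].
  exists (1 - q)%Q. rewrite Q2R_minus, Q2R_1. reflexivity.
Qed.
Lemma rat_oplus_prop (r s : rat01) :
  (exists q : Q, Q2R q = Rmin (val r + val s) 1) /\ 0 <= Rmin (val r + val s) 1 <= 1.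
Proof.
  destruct r as [r [[p <-] Hr]], s as [s [[q <-] Hs]]; simpl. split; [| solve_minmax].
  unfold Rmin; destruct Rle_dec; [exists (p + q)%Q; apply Q2R_plus | exists 1%Q; apply Q2R_1].
Qed.

Definition rat_neg (r : rat01) : rat01 := exist _ _ (rat_neg_prop r).
Definition rat_oplus (r s : rat01) : rat01 := exist _ _ (rat_oplus_prop r s).
Definition rat_mul (r s : rat01) : rat01 := rat_neg (rat_oplus (rat_neg r) (rat_neg s)).
Lemma rat_negK r : rat_neg (rat_neg r) = r.
Proof. apply rat01_eq. simpl. lra. Qed.

Fixpoint rat_pow (r : rat01) (n : nat) : rat01 :=
  match n with O => rat_neg q0 | S n => rat_mul r (rat_pow r n) end.

Lemma rat_pow_val r n : val (rat_pow r n) = Rmax 0 (1 - INR n * (1 - val r)).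
Proof.
  induction n as [|n IHn]; simpl rat_pow; [simpl; solve_minmax |].
  unfold rat_mul, rat_neg, rat_oplus; simpl proj1_sig. rewrite IHn, S_INR.
  pose proof (rat01_range r). pose proof (pos_INR n).
  assert (0 <= INR n * (1 - val r)) by nra. solve_minmax.
Qed.

Lemma rat01_pow_pos n : exists q : rat01, val q < 1 /\ 0 < val (rat_pow q n).
Proof.
  pose proof (pos_INR n) as Hn.
  assert (Hd : 0 < / (INR n + 1) <= 1).
  { split; [apply Rinv_0_lt_compat; lra |].
    rewrite <- Rinv_1. apply Rinv_le_contravar; lra. }
  destruct (rat01_dense (1 - / (INR n + 1)) 1) as [q Hq]; try lra.
  exists q. split; [lra |]. rewrite rat_pow_val.
  assert (INR n * (1 - val q) < 1); [| solve_minmax].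
  apply Rle_lt_trans with (INR n * / (INR n + 1)); [apply Rmult_le_compat_l; lra |].
  apply Rmult_lt_reg_r with (INR n + 1); [lra |].
  rewrite Rmult_assoc, Rinv_l by lra. lra.
Qed.

Section Pavelka.
Context {A : Type} {op : A -> A -> A} {ng : A -> A} {c : rat01 -> A} (HP : is_pavelka op ng c).
Let HMV : is_MV op ng (c q0) := proj1 HP.

Local Notation z := (c q0).
Local Notation one := (mv_one ng (c q0)).
Local Notation mul := (mv_mul op ng).
Local Notation imp := (mv_imp op ng).
Local Notation pow := (@mv_pow A op ng (c q0)).

Lemma const_oplus r s : op (c r) (c s) = c (rat_oplus r s).
Proof. apply HP. reflexivity. Qed.
Lemma const_neg r : ng (c r) = c (rat_neg r).
Proof. apply HP. reflexivity. Qed.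
Lemma const_one (r : rat01) : val r = 1 -> c r = one.
Proof.
  intro E. unfold mv_one. rewrite const_neg. f_equal. apply rat01_eq. simpl. lra.
Qed.
Lemma const_mul r s : mul (c r) (c s) = c (rat_mul r s).
Proof. unfold mv_mul, rat_mul. rewrite !const_neg, const_oplus, const_neg. reflexivity. Qed.
Lemma const_imp r s : imp (c r) (c s) = c (rat_oplus (rat_neg r) s).
Proof. unfold mv_imp. rewrite const_neg, const_oplus. reflexivity. Qed.
Lemma const_pow r n : pow (c r) n = c (rat_pow r n).
Proof.
  induction n as [|n IHn]; simpl; [rewrite const_neg | rewrite IHn, const_mul]; reflexivity.
Qed.

(* In a proper filter a constant [t < 1] is excluded, since some power of it is [0]. *)
Lemma proper_filter_const F (t : rat01) : proper_filter op ng z F -> F (c t) -> val t = 1.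
Proof.
  intros [HF Hp] Ht. pose proof (rat01_range t).
  destruct (Rle_lt_dec 1 (val t)); [lra | exfalso].
  destruct (INR_archimed (1 - val t) 1) as [n Hn]; [lra |].
  apply (proper_filter_zero HMV HF Hp).
  replace z with (c (rat_pow t n)).
  - rewrite <- const_pow. apply (filter_pow HF), Ht.
  - f_equal. apply rat01_eq. rewrite rat_pow_val. simpl. solve_minmax.
Qed.
End Pavelka.

(* The value of [x/F] is the cut [sup {r | r -> x in F}] determined by the rational constants;
   linearity of [F] makes it a Dedekind cut. *)
Section Quotient.
Context {A : Type} {op : A -> A -> A} {ng : A -> A} {c : rat01 -> A} (HP : is_pavelka op ng c).
Context {F : A -> Prop} (HM : maximal_filter op ng (c q0) F).
Let HMV : is_MV op ng (c q0) := proj1 HP.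
Let HF : is_filter op ng (c q0) F := proj1 (proj1 HM).

Local Notation z := (c q0).
Local Notation one := (mv_one ng (c q0)).
Local Notation mul := (mv_mul op ng).
Local Notation imp := (mv_imp op ng).
Local Notation pow := (@mv_pow A op ng (c q0)).

Definition lower_cut x (q : rat01) := F (imp (c q) x).
Definition upper_cut x (q : rat01) := F (imp x (c q)).

Lemma lower_cut_q0 x : lower_cut x q0.
Proof.
  unfold lower_cut, mv_imp. change (F (op one x)). rewrite (mv_add1l HMV). apply (filter_one HF).
Qed.
Lemma upper_cut_one x (q : rat01) : val q = 1 -> upper_cut x q.
Proof.
  intro E. unfold upper_cut. rewrite (const_one HP q E). unfold mv_imp.
  rewrite (mv_add1 HMV). apply (filter_one HF).
Qed.
Lemma lower_le_upper x p q : lower_cut x p -> upper_cut x q -> val p <= val q.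
Proof.
  intros Hp Hq. pose proof (filter_imp_trans HMV HF _ _ _ Hp Hq) as H.
  rewrite (const_imp HP) in H. apply (proper_filter_const HP F _ (proj1 HM)) in H.
  simpl in H. pose proof (rat01_range p); pose proof (rat01_range q). solve_minmax.
Qed.
Lemma cut_linear x q : lower_cut x q \/ upper_cut x q.
Proof. apply (maximal_filter_linear HMV F), HM. Qed.
Lemma lower_cut_neg x q : lower_cut (ng x) q <-> upper_cut x (rat_neg q).
Proof.
  unfold lower_cut, upper_cut, mv_imp. rewrite (const_neg HP), (mv_addC HMV). tauto.
Qed.

Definition lower_values x r := exists q, lower_cut x q /\ r = val q.
Lemma lower_values_bound x : bound (lower_values x).
Proof. exists 1. intros r [q [_ ->]]. apply rat01_range. Qed.
Lemma lower_values_inhabited x : exists r, lower_values x r.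
Proof. exists 0, q0. split; [apply lower_cut_q0 | reflexivity]. Qed.

Definition quot_val x : R :=
  proj1_sig (completeness _ (lower_values_bound x) (lower_values_inhabited x)).

Lemma quot_val_lub x : is_lub (lower_values x) (quot_val x).
Proof. unfold quot_val. destruct completeness; auto. Qed.
Lemma quot_val_ge x q : lower_cut x q -> val q <= quot_val x.
Proof. intro H. apply (proj1 (quot_val_lub x)). exists q; auto. Qed.
Lemma quot_val_le_bound x b : (forall q, lower_cut x q -> val q <= b) -> quot_val x <= b.
Proof. intro H. apply (proj2 (quot_val_lub x)). intros r [q [Hq ->]]. auto. Qed.
Lemma quot_val_le x q : upper_cut x q -> quot_val x <= val q.
Proof. intro H. apply quot_val_le_bound. intros p Hp. eapply lower_le_upper; eauto. Qed.
Lemma quot_val_range x : 0 <= quot_val x <= 1.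
Proof.
  split; [apply (quot_val_ge x q0 (lower_cut_q0 x)) |].
  apply Rle_trans with (val (rat_neg q0)); [apply quot_val_le, upper_cut_one |]; simpl; lra.
Qed.
Lemma lower_cut_of_lt x q : val q < quot_val x -> lower_cut x q.
Proof. intro H. destruct (cut_linear x q) as [|Hu]; auto. apply quot_val_le in Hu. lra. Qed.
Lemma upper_cut_of_gt x q : quot_val x < val q -> upper_cut x q.
Proof. intro H. destruct (cut_linear x q) as [Hl|]; auto. apply quot_val_ge in Hl. lra. Qed.
Lemma lower_cut_approx x eps : 0 < eps -> exists q, lower_cut x q /\ quot_val x - eps < val q.
Proof.
  intro He. apply NNPP; intro Hn.
  assert (quot_val x <= quot_val x - eps); [| lra].
  apply quot_val_le_bound. intros q Hq. apply Rnot_lt_le. intro. apply Hn; eauto.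
Qed.
Lemma upper_cut_approx x eps : 0 < eps -> exists q, upper_cut x q /\ val q < quot_val x + eps.
Proof.
  intro He. pose proof (quot_val_range x). destruct (Rlt_le_dec (quot_val x) 1).
  - destruct (rat01_dense (quot_val x) (Rmin 1 (quot_val x + eps))) as [q Hq]; try solve_minmax.
    exists q. split; [apply upper_cut_of_gt |]; solve_minmax.
  - exists (rat_neg q0). split; [apply upper_cut_one |]; simpl; lra.
Qed.

Lemma quot_val_const r : quot_val (c r) = val r.
Proof.
  assert (H : F (imp (c r) (c r)))
    by (unfold mv_imp; rewrite (mv_addNl HMV); apply (filter_one HF)).
  apply Rle_antisym; [apply quot_val_le | apply quot_val_ge]; exact H.
Qed.

Lemma quot_val_neg x : quot_val (ng x) = 1 - quot_val x.
Proof.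
  apply Rle_antisym.
  - apply quot_val_le_bound. intros q Hq. apply lower_cut_neg, quot_val_le in Hq. simpl in Hq. lra.
  - apply Rle_plus_epsilon. intros eps He. destruct (upper_cut_approx x eps He) as [q [Hq Hlt]].
    rewrite <- (rat_negK q) in Hq. apply lower_cut_neg, quot_val_ge in Hq. simpl in Hq. lra.
Qed.

Lemma lower_cut_oplus x y p q :
  lower_cut x p -> lower_cut y q -> lower_cut (op x y) (rat_oplus p q).
Proof.
  unfold lower_cut. intros Hp Hq. rewrite <- (const_oplus HP).
  eapply (filter_up HF); [apply (filter_mul HF); [exact Hp | exact Hq] | apply (mv_imp_add HMV)].
Qed.
Lemma upper_cut_oplus x y p q :
  upper_cut x p -> upper_cut y q -> upper_cut (op x y) (rat_oplus p q).
Proof.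
  unfold upper_cut. intros Hp Hq. rewrite <- (const_oplus HP).
  eapply (filter_up HF); [apply (filter_mul HF); [exact Hp | exact Hq] | apply (mv_imp_add HMV)].
Qed.

Lemma quot_val_oplus x y : quot_val (op x y) = Rmin (quot_val x + quot_val y) 1.
Proof.
  pose proof (quot_val_range x); pose proof (quot_val_range y).
  apply Rle_antisym; apply Rle_plus_epsilon; intros eps He.
  - destruct (upper_cut_approx x (eps/2)) as [p [Hp1 Hp2]]; [lra |].
    destruct (upper_cut_approx y (eps/2)) as [q [Hq1 Hq2]]; [lra |].
    pose proof (quot_val_le _ _ (upper_cut_oplus x y p q Hp1 Hq1)) as Hpq.
    simpl in Hpq. solve_minmax.
  - destruct (lower_cut_approx x (eps/2)) as [p [Hp1 Hp2]]; [lra |].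
    destruct (lower_cut_approx y (eps/2)) as [q [Hq1 Hq2]]; [lra |].
    pose proof (quot_val_ge _ _ (lower_cut_oplus x y p q Hp1 Hq1)) as Hpq.
    simpl in Hpq. solve_minmax.
Qed.

(* If [x] is not in [F], then [f * x^n = 0] for some [f] in [F]; a rational [q < 1] in the
   lower cut of [x] would then put the negation of the positive constant [q^n] into [F]. *)
Lemma quot_val_kernel x : quot_val x = 1 <-> F x.
Proof.
  split.
  - intro H1. apply NNPP; intro Hx.
    destruct (maximal_filter_avoid HMV F x HM Hx) as [f [n [Hf Ef]]].
    destruct (rat01_pow_pos n) as [q [Hq1 Hq2]].
    assert (Hpow : F (imp (c (rat_pow q n)) (pow x n))).
    { rewrite <- (const_pow HP). eapply (filter_up HF); [| apply (mv_imp_pow HMV)].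
      apply (filter_pow HF). change (lower_cut x q). apply lower_cut_of_lt. lra. }
    assert (Hneg : F (ng (c (rat_pow q n)))).
    { eapply (filter_up HF); [apply (filter_mul HF); [exact Hf | exact Hpow] |].
      replace (ng (c (rat_pow q n))) with (imp (c (rat_pow q n)) z)
        by (unfold mv_imp; apply (mv_add0 HMV)).
      apply (proj1 (mv_residuation HMV _ _ _)).
      rewrite <- (mv_mulA HMV), (mv_mulC HMV _ (c _)).
      apply (mv_le_trans HMV) with (mul f (pow x n)); [| rewrite Ef; apply (mv_le_refl HMV)].
      apply (mv_mul_monor HMV), (mv_modus_ponens HMV). }
    rewrite (const_neg HP) in Hneg. apply (proper_filter_const HP F _ (proj1 HM)) in Hneg.
    simpl in Hneg. lra.
  - intro H. apply Rle_antisym; [apply quot_val_range |].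
    apply Rle_trans with (val (rat_neg q0)); [simpl; lra |]. apply quot_val_ge.
    unfold lower_cut. rewrite (const_one HP) by (simpl; lra). unfold mv_imp.
    rewrite (mv_neg1 HMV), (mv_add0l HMV). exact H.
Qed.

Lemma quotient_exists : exists h, quot_hom op ng c F h.
Proof.
  exists (fun x => exist _ (quot_val x) (quot_val_range x)).
  split; [split; [| split] | intro x; apply quot_val_kernel]; intros; apply I01_eq; simpl.
  - apply quot_val_oplus.
  - apply quot_val_neg.
  - apply quot_val_const.
Qed.
End Quotient.

Section HomToUnit.
Context {A : Type} {op : A -> A -> A} {ng : A -> A} {c : rat01 -> A}.
Context {h : A -> I01} (Hh : pavelka_hom op ng c i_oplus i_neg i_const h).

Local Notation le := (mv_le op ng (c q0)).
Local Notation mul := (mv_mul op ng).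
Local Notation imp := (mv_imp op ng).
Local Notation pow := (@mv_pow A op ng (c q0)).

Lemma hom_oplus_val x y : val (h (op x y)) = Rmin (val (h x) + val (h y)) 1.
Proof. rewrite (proj1 Hh). reflexivity. Qed.
Lemma hom_neg_val x : val (h (ng x)) = 1 - val (h x).
Proof. rewrite (proj1 (proj2 Hh)). reflexivity. Qed.
Lemma hom_const_val r : val (h (c r)) = val r.
Proof. rewrite (proj2 (proj2 Hh)). reflexivity. Qed.
Lemma hom_one_val : val (h (mv_one ng (c q0))) = 1.
Proof. unfold mv_one. rewrite hom_neg_val, hom_const_val. simpl. lra. Qed.
Lemma hom_imp_val x y : val (h (imp x y)) = Rmin (1 - val (h x) + val (h y)) 1.
Proof. unfold mv_imp. rewrite hom_oplus_val, hom_neg_val. reflexivity. Qed.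
Lemma hom_mul_val x y : val (h (mul x y)) = Rmax 0 (val (h x) + val (h y) - 1).
Proof.
  unfold mv_mul. rewrite hom_neg_val, hom_oplus_val, !hom_neg_val.
  pose proof (I01_range (h x)); pose proof (I01_range (h y)). solve_minmax.
Qed.
Lemma hom_mono x y : le x y -> val (h x) <= val (h y).
Proof.
  intro H. pose proof (hom_imp_val x y) as E. unfold mv_imp in E. unfold mv_le in H.
  rewrite H, hom_one_val in E. solve_minmax.
Qed.
Lemma hom_pow_one x n : val (h x) = 1 -> val (h (pow x n)) = 1.
Proof.
  intro H. induction n; simpl; [apply hom_one_val |].
  rewrite hom_mul_val, H, IHn. solve_minmax.
Qed.
End HomToUnit.

Lemma quot_spec {A : Type} {op : A -> A -> A} {ng : A -> A} {c : rat01 -> A} F :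
  is_pavelka op ng c -> maximal_filter op ng (c q0) F -> quot_hom op ng c F (quot op ng c F).
Proof.
  intros HP HM. unfold quot. apply epsilon_spec, (quotient_exists HP HM).
Qed.

Lemma hom_kernel_maximal {A B : Type} {op : A -> A -> A} {ng : A -> A} {z : A}
  {bop : B -> B -> B} {bng : B -> B} {bz : B} {h : A -> B} :
  is_MV op ng z -> simple_MV bop bng bz -> MV_hom op ng z bop bng bz h ->
  maximal_filter op ng z (fun a => h a = mv_one bng bz).
Proof.
  intros MA [MB [Hnt Hsimp]] [Hop [Hng Hz]].
  assert (Hone : h (mv_one ng z) = mv_one bng bz) by (unfold mv_one; rewrite Hng, Hz; auto).
  assert (Hmul : forall x y, h (mv_mul op ng x y) = mv_mul bop bng (h x) (h y)).
  { intros. unfold mv_mul. rewrite Hng, Hop, !Hng. auto. }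
  assert (Hle : forall x y, mv_le op ng z x y -> mv_le bop bng bz (h x) (h y)).
  { intros x y H. unfold mv_le in *. rewrite <- Hng, <- Hop, H. auto. }
  assert (HK : is_filter op ng z (fun a => h a = mv_one bng bz)).
  { split; [| split]; auto.
    - intros x y Hx Hxy. apply Hle in Hxy. rewrite Hx in Hxy. apply (mv_le1_eq MB), Hxy.
    - intros x y Hx Hy. rewrite Hmul, Hx, Hy. apply (mv_mul1 MB). }
  split; [split; [exact HK | exists z; rewrite Hz; exact Hnt] |].
  intros G [HG [w Hw]] HKG x Gx.
  (* The image of [G] generates a filter of the simple algebra [B]; it cannot be all of [B]. *)
  set (G' := fun b => exists g, G g /\ mv_le bop bng bz (h g) b).
  assert (HG' : is_filter bop bng bz G').
  { split; [| split].
    - exists (mv_one ng z). split; [apply HG | rewrite Hone; apply (mv_le_refl MB)].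
    - intros a b [g [Gg Hg]] Hab. exists g. split; auto. eapply (mv_le_trans MB); eauto.
    - intros a b [g [Gg Hg]] [g' [Gg' Hg']]. exists (mv_mul op ng g g').
      split; [apply HG; auto | rewrite Hmul; apply (mv_mul_mono2 MB); auto]. }
  destruct (Hsimp G' HG') as [Htriv|Hall].
  - apply Htriv. exists x. split; auto. apply (mv_le_refl MB).
  - exfalso. destruct (Hall bz) as [g [Gg Hg]]. apply (mv_le0_eq MB) in Hg.
    assert (Gng : G (ng g)) by (apply HKG; rewrite Hng, Hg; auto).
    apply Hw, (filter_up HG) with z; [| apply (mv_le0 MA)].
    rewrite <- (mv_mulN MA g). apply (filter_mul HG); auto.
Qed.

(* Zorn's lemma on the filters avoiding [0]; the empty set is admitted so that the empty chain
   has an upper bound. *)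
Lemma filter_extends_maximal {A : Type} {op : A -> A -> A} {ng : A -> A} {z : A} (F0 : A -> Prop) :
  is_MV op ng z -> is_filter op ng z F0 -> ~ F0 z ->
  exists F, maximal_filter op ng z F /\ forall x, F0 x -> F x.
Proof.
  intros MA HF0 Hz0.
  set (P := fun X : A -> Prop =>
    (forall x, ~ X x) \/ (is_filter op ng z X /\ ~ X z /\ forall x, F0 x -> X x)).
  destruct (@classical_sets.Zorn_bigcup A P) as [Fm [PF Fmax]].
  - intros Fc HFc Htot. unfold P.
    destruct (classic (exists X a, Fc X /\ X a)) as [[X0 [a0 [FX0 Xa0]]]|Hne].
    + right.
      assert (Hfil : forall X a, Fc X -> X a ->
                is_filter op ng z X /\ ~ X z /\ forall x, F0 x -> X x).
      { intros X a FX Xa. destruct (HFc X FX) as [He|Hr]; auto. exfalso; eapply He; eauto. }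
      destruct (Hfil X0 a0 FX0 Xa0) as [HX0 [Hz X0F]].
      unfold classical_sets.bigcup, classical_sets.mkset. simpl.
      split; [split; [| split] | split].
      * exists X0; auto. apply (filter_one HX0).
      * intros x1 y1 [X FX Xx] Hxy. exists X; auto.
        apply (filter_up (proj1 (Hfil X x1 FX Xx))) with x1; auto.
      * intros x1 y1 [X FX Xx] [Y FY Yy]. destruct (Htot X Y FX FY) as [XY|YX].
        -- exists Y; auto. apply (filter_mul (proj1 (Hfil Y y1 FY Yy))); auto.
        -- exists X; auto. apply (filter_mul (proj1 (Hfil X x1 FX Xx))); auto.
      * intros [X FX Xz]. apply (Hfil X z FX Xz); auto.
      * intros x Hx. exists X0; auto.
    + left. intros x [X FX Xx]. apply Hne. eauto.
  - destruct PF as [Hempty|[HF [HFz HF0F]]].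
    + exfalso. apply (Fmax F0); [split | right; auto].
      * intros x Hx. exfalso; eapply Hempty; eauto.
      * intro Hs. apply (Hempty (mv_one ng z)), Hs, (filter_one HF0).
    + exists Fm. split; [split; [split; [exact HF | exists z; exact HFz] |] | exact HF0F].
      intros G [HG [w Hw]] HFG x Gx. apply NNPP; intro Hx.
      apply (Fmax G); [split; [intros t Ht; auto | intro Hs; apply Hx, Hs, Gx] |].
      right. split; [exact HG | split; [| intros t Ht; auto]].
      intro Gz. apply Hw, (filter_up HG) with z; [exact Gz | apply (mv_le0 MA)].
Qed.

Section Semisimple.
Context {A : Type} {op : A -> A -> A} {ng : A -> A} {c : rat01 -> A} (HP : is_pavelka op ng c).
Hypothesis HS : semisimple op ng (c q0).
Let HMV : is_MV op ng (c q0) := proj1 HP.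

Local Notation le := (mv_le op ng (c q0)).
Local Notation imp := (mv_imp op ng).

Lemma semisimple_le x y :
  (forall F, maximal_filter op ng (c q0) F -> val (quot op ng c F x) <= val (quot op ng c F y)) ->
  le x y.
Proof.
  intro H. destruct HS as [I [B [bop [bng [bz [hs [Hsimp [Hhom [_ Hinj]]]]]]]]].
  unfold mv_le. change (imp x y = mv_one ng (c q0)). apply Hinj. intro i.
  pose proof (hom_kernel_maximal HMV (Hsimp i) (Hhom i)) as HK.
  set (K := fun a => hs i a = mv_one (bng i) (bz i)) in HK.
  destruct (quot_spec K HP HK) as [Hq Hker].
  assert (HKxy : K (imp x y)).
  { apply Hker. rewrite (hom_imp_val Hq). specialize (H K HK).
    pose proof (I01_range (quot op ng c K x)). solve_minmax. }
  rewrite HKxy. destruct (Hhom i) as [_ [Hng Hz]]. unfold mv_one. rewrite Hng, Hz. reflexivity.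
Qed.
Lemma semisimple_eq x y :
  (forall F, maximal_filter op ng (c q0) F -> val (quot op ng c F x) = val (quot op ng c F y)) ->
  x = y.
Proof.
  intro H. apply (mv_le_antisym HMV); apply semisimple_le; intros F HF; rewrite (H F HF); lra.
Qed.
End Semisimple.

Lemma tense_pavelka_swap {A : Type} {op : A -> A -> A} {ng : A -> A} {c : rat01 -> A}
  {G H : A -> A} :
  is_tense_pavelka op ng c G H -> is_tense_pavelka op ng c H G.
Proof.
  intros (HP & G1 & H1 & G2 & H2 & P1 & P2).
  exact (conj HP (conj H1 (conj G1 (conj H2 (conj G2 (conj P2 P1)))))).
Qed.

Section Tense.
Context {A : Type} {op : A -> A -> A} {ng : A -> A} {c : rat01 -> A} {G H : A -> A}.
Hypothesis HT : is_tense_pavelka op ng c G H.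
Hypothesis HS : semisimple op ng (c q0).
Let HP : is_pavelka op ng c := proj1 HT.
Let HMV : is_MV op ng (c q0) := proj1 HP.

Local Notation z := (c q0).
Local Notation one := (mv_one ng (c q0)).
Local Notation le := (mv_le op ng (c q0)).
Local Notation mul := (mv_mul op ng).
Local Notation imp := (mv_imp op ng).
Local Notation pow := (@mv_pow A op ng (c q0)).
Local Notation q F := (quot op ng c F).

(* The "past possibility" operator [P x = not H not x]; (PT3) says that [P] and [G] are adjoint. *)
Definition tense_P x := ng (H (ng x)).

Lemma tense_G_mono x y : le x y -> le (G x) (G y).
Proof.
  intro Hxy. rewrite <- (mv_meet_idPl HMV x y Hxy), (proj1 (proj2 HT)). apply (mv_meetr HMV).
Qed.
Lemma tense_P_mono x y : le x y -> le (tense_P x) (tense_P y).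
Proof.
  intro Hxy. apply (mv_neg_anti HMV). rewrite <- (mv_meet_idPl HMV _ _ (mv_neg_anti HMV _ _ Hxy)),
    (proj1 (proj2 (proj2 HT))). apply (mv_meetr HMV).
Qed.
Lemma tense_P_G a : le (tense_P (G a)) a. Proof. apply HT. Qed.
Lemma tense_G_P w : le w (G (tense_P w)). Proof. apply (mv_neg_antiK HMV), HT. Qed.
Lemma tense_const_imp_G (r : rat01) x : imp (c r) (G x) = G (imp (c r) x).
Proof. apply HT. Qed.

Lemma tense_P_bound_canon_frame (s t : SpecM op ng c) b : b <= 1 ->
  (forall w, proj1_sig t w -> b <= val (q (proj1_sig s) (tense_P w))) ->
  b <= val (canon_frame op ng c G s t).
Proof.
  destruct s as [S HSm], t as [T HTm]; simpl. intros Hb1 Hb.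
  destruct (quot_spec S HP HSm) as [Hs _]. destruct (quot_spec T HP HTm) as [Ht HTker].
  apply Iinf_glb; [exact Hb1 |]. intro a. rewrite i_imp_val. cbn [proj1_sig].
  apply Rmin_glb; [| exact Hb1]. apply Rle_plus_epsilon. intros eps Heps.
  destruct (rat01_approx_below (val (q T (G a))) eps) as [p [Hp1 Hp2]];
    [apply I01_range | exact Heps |].
  assert (Hw : T (imp (c p) (G a))).
  { apply HTker. rewrite (hom_imp_val Ht), (hom_const_val Ht). solve_minmax. }
  assert (HPw : le (tense_P (imp (c p) (G a))) (imp (c p) a))
    by (rewrite tense_const_imp_G; apply tense_P_G).
  pose proof (Hb _ Hw) as Hbw. apply (hom_mono Hs) in HPw.
  rewrite (hom_imp_val Hs), (hom_const_val Hs) in HPw. solve_minmax.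
Qed.

(* The witness for the hard inequality of the representation: a maximal filter [F'] containing
   every [d -> P w * not y] with [w] in [F]; it is proper because, by semisimplicity, otherwise
   [w <= G (P w) <= (1 - d) -> G y] for some [w] in [F], which the choice of [d] forbids. *)
Lemma tense_separating_filter F y : maximal_filter op ng z F -> val (q F (G y)) < 1 ->
  exists F' d, maximal_filter op ng z F' /\ 0 < d /\
    forall w, F w -> val (q F' y) + d <= val (q F' (tense_P w)).
Proof.
  intros HF Hy. set (phi := val (q F (G y))) in Hy.
  assert (Hphi : 0 <= phi <= 1) by apply I01_range.
  destruct (rat01_dense 0 (1 - phi)) as [d Hd]; try lra.
  set (t := fun w => imp (c d) (mul (tense_P w) (ng y))).
  set (N := fun x => exists w n, F w /\ le (pow (t w) n) x).
  assert (HN : is_filter op ng z N).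
  { apply (filter_generated_by_pow HMV); [apply HF |]. intros w w' Hww'.
    apply (mv_imp_monor HMV), (mv_mul_monol HMV), tense_P_mono, Hww'. }
  assert (HNz : ~ N z).
  { intros [w [n [Hw Hl]]].
    assert (Hle : le (mul (tense_P w) (c (rat_neg d))) y).
    { apply (semisimple_le HP HS). intros F' HF'. destruct (quot_spec F' HP HF') as [Hh _].
      assert (Ht : val (q F' (t w)) <> 1).
      { intro E. apply (hom_pow_one Hh _ n) in E. apply (hom_mono Hh) in Hl.
        rewrite (hom_const_val Hh) in Hl. simpl in Hl. lra. }
      unfold t in Ht.
      rewrite (hom_imp_val Hh), (hom_const_val Hh), (hom_mul_val Hh), (hom_neg_val Hh) in Ht.
      rewrite (hom_mul_val Hh), (hom_const_val Hh). simpl.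
      pose proof (I01_range (q F' (tense_P w))); pose proof (I01_range (q F' y)). solve_minmax. }
    assert (Hw2 : le w (imp (c (rat_neg d)) (G y))).
    { rewrite tense_const_imp_G. eapply (mv_le_trans HMV); [apply tense_G_P |].
      apply tense_G_mono, (proj1 (mv_residuation HMV _ _ _)), Hle. }
    destruct (quot_spec F HP HF) as [Hh Hker]. apply (hom_mono Hh) in Hw2.
    rewrite (hom_imp_val Hh), (hom_const_val Hh), (proj2 (Hker w) Hw) in Hw2.
    simpl in Hw2. fold phi in Hw2. solve_minmax. }
  destruct (filter_extends_maximal N HMV HN HNz) as [F' [HF' HNF']].
  exists F', (val d). split; [exact HF' | split; [lra |]].
  intros w Hw. destruct (quot_spec F' HP HF') as [Hh Hker].
  assert (Htw : F' (t w)).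
  { apply HNF'. exists w, 1%nat. split; [exact Hw |].
    simpl. rewrite (mv_mul1 HMV). apply (mv_le_refl HMV). }
  apply Hker in Htw. unfold t in Htw.
  rewrite (hom_imp_val Hh), (hom_const_val Hh), (hom_mul_val Hh), (hom_neg_val Hh) in Htw.
  pose proof (I01_range (q F' (tense_P w))); pose proof (I01_range (q F' y)). solve_minmax.
Qed.

(* For [(G x)/F < r < inf], the separating filter for [y = r -> x] violates the infimum. *)
Lemma quot_G_representation (t : SpecM op ng c) x :
  val (q (proj1_sig t) (G x)) = val (f_S (canon_frame op ng c G) (nat_emb op ng c x) t).
Proof.
  destruct t as [F HF]. unfold f_S, nat_emb. cbn [proj1_sig].
  set (phi := val (q F (G x))). assert (Hphi : 0 <= phi <= 1) by apply I01_range.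
  set (R0 := canon_frame op ng c G).
  apply Rle_antisym.
  - apply Iinf_glb; [lra |]. intros [F' HF']. rewrite i_imp_val. cbn [proj1_sig].
    pose proof (Iinf_lb (fun a => i_imp (q F (G a)) (q F' a)) x) as Hx.
    cbv beta in Hx. rewrite i_imp_val in Hx. fold phi in Hx.
    pose proof (I01_range (q F' x)).
    pose proof (I01_range (Iinf (fun a => i_imp (q F (G a)) (q F' a)))).
    unfold R0, canon_frame. cbn [proj1_sig]. clearbody phi. solve_minmax.
  - set (inf := val (Iinf _)). apply Rnot_lt_le. intro Hlt.
    assert (Hinf : inf <= 1) by apply I01_range.
    destruct (rat01_dense phi inf) as [r [Hr1 Hr2]]; try lra.
    destruct (quot_spec F HP HF) as [Hh _].
    assert (Hy : val (q F (G (imp (c r) x))) < 1).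
    { rewrite <- tense_const_imp_G, (hom_imp_val Hh), (hom_const_val Hh). fold phi. solve_minmax. }
    destruct (tense_separating_filter F _ HF Hy) as [F' [d [HF' [Hd HFF']]]].
    destruct (quot_spec F' HP HF') as [Hh' _].
    set (s := exist _ F' HF' : SpecM op ng c). set (t := exist _ F HF : SpecM op ng c).
    assert (HR : val (q F' (imp (c r) x)) + d <= val (R0 s t)).
    { apply tense_P_bound_canon_frame; [| exact HFF'].
      eapply Rle_trans; [apply (HFF' one), (filter_one (proj1 (proj1 HF))) |]. apply I01_range. }
    assert (Hl : inf <= Rmin (1 - val (R0 s t) + val (q F' x)) 1)
      by exact (Iinf_lb (fun s0 => i_imp (R0 s0 t) (q (proj1_sig s0) x)) s).
    rewrite (hom_imp_val Hh'), (hom_const_val Hh') in HR.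
    pose proof (I01_range (R0 s t)); pose proof (I01_range (q F' x)).
    pose proof (rat01_range r). solve_minmax.
Qed.

Lemma canon_frame_converse (s t : SpecM op ng c) :
  val (canon_frame op ng c H s t) = val (canon_frame op ng c G t s).
Proof.
  destruct s as [S HSm], t as [T HTm]. unfold canon_frame; cbn [proj1_sig].
  destruct (quot_spec S HP HSm) as [Hs _]. destruct (quot_spec T HP HTm) as [Ht _].
  apply Rle_antisym; apply Iinf_le_cofinal.
  - intro a. exists (ng (G a)). rewrite !i_imp_val.
    assert (Hle : le (ng a) (H (ng (G a))))
      by (apply (mv_neg_antiK HMV); rewrite (mv_negK HMV); apply HT).
    apply (hom_mono Ht) in Hle. rewrite (hom_neg_val Ht) in Hle. rewrite (hom_neg_val Hs).
    pose proof (I01_range (q T a)); pose proof (I01_range (q S (G a))).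
    pose proof (I01_range (q T (H (ng (G a))))). solve_minmax.
  - intro b. exists (ng (H b)). rewrite !i_imp_val.
    assert (Hle : le (ng b) (G (ng (H b))))
      by (apply (mv_neg_antiK HMV); rewrite (mv_negK HMV); apply HT).
    apply (hom_mono Hs) in Hle. rewrite (hom_neg_val Hs) in Hle. rewrite (hom_neg_val Ht).
    pose proof (I01_range (q S b)); pose proof (I01_range (q T (H b))).
    pose proof (I01_range (q S (G (ng (H b))))). solve_minmax.
Qed.
End Tense.

Section NaturalEmbedding.
Context {A : Type} {op : A -> A -> A} {ng : A -> A} {c : rat01 -> A} (HP : is_pavelka op ng c).
Local Notation T := (SpecM op ng c).

Lemma nat_emb_pavelka_hom :
  pavelka_hom op ng c (pw_oplus T) (pw_neg T) (pw_const T) (nat_emb op ng c).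
Proof.
  split; [| split]; intros; apply functional_extensionality; intros [F HF];
    apply (quot_spec F HP HF).
Qed.

Lemma nat_emb_injective : semisimple op ng (c q0) ->
  forall x y, nat_emb op ng c x = nat_emb op ng c y -> x = y.
Proof.
  intros HS x y E. apply (semisimple_eq HP HS). intros F HF.
  exact (f_equal (@proj1_sig _ _) (equal_f E (exist _ F HF))).
Qed.
End NaturalEmbedding.

Lemma nat_emb_G {A : Type} {op : A -> A -> A} {ng : A -> A} {c : rat01 -> A} {G H : A -> A} :
  is_tense_pavelka op ng c G H -> semisimple op ng (c q0) ->
  forall x, nat_emb op ng c (G x) = f_S (canon_frame op ng c G) (nat_emb op ng c x).
Proof.
  intros HT HS x. apply I01_funext. intro t. apply (quot_G_representation HT HS).
Qed.

Lemma nat_emb_H {A : Type} {op : A -> A -> A} {ng : A -> A} {c : rat01 -> A} {G H : A -> A} :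
  is_tense_pavelka op ng c G H -> semisimple op ng (c q0) ->
  forall x, nat_emb op ng c (H x) =
            f_S (Rinv_frame (canon_frame op ng c G)) (nat_emb op ng c x).
Proof.
  intros HT HS x. rewrite (nat_emb_G (tense_pavelka_swap HT) HS).
  apply I01_funext. intro t. unfold f_S, Rinv_frame.
  apply Rle_antisym; apply Iinf_le; intro s; rewrite !i_imp_val, (canon_frame_converse HT);
    lra.
Qed.

Theorem theorem11 :
  (* (i) *)
  (forall (T : Type) (R : T -> T -> I01),
     is_tense_pavelka (pw_oplus T) (pw_neg T) (pw_const T) (f_S R) (f_S (Rinv_frame R))) /\
  (* (ii) *)
  (forall (A : Type) (oplus : A -> A -> A) (neg : A -> A) (c : rat01 -> A) (G H : A -> A),
     is_tense_pavelka oplus neg c G H ->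
     semisimple oplus neg (c q0) ->
     pavelka_hom oplus neg c
       (pw_oplus (SpecM oplus neg c)) (pw_neg (SpecM oplus neg c)) (pw_const (SpecM oplus neg c))
       (nat_emb oplus neg c) /\
     (forall x y, nat_emb oplus neg c x = nat_emb oplus neg c y -> x = y) /\
     (forall x, nat_emb oplus neg c (G x) = f_S (canon_frame oplus neg c G) (nat_emb oplus neg c x)) /\
     (forall x, nat_emb oplus neg c (H x) =
                f_S (Rinv_frame (canon_frame oplus neg c G)) (nat_emb oplus neg c x))).
Proof.
  split; [exact frame_tense_pavelka |].
  intros A op ng c G H HT HS.
  split; [exact (nat_emb_pavelka_hom (proj1 HT)) |].
  split; [exact (nat_emb_injective (proj1 HT) HS) |].
  split; [exact (nat_emb_G HT HS) | exact (nat_emb_H HT HS)].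
Qed.
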